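(* Let $m\ge 1$, let $D_{2m}=\langle u,v : u^m=e=v^2,\ vu=u^{m-1}v\rangle$, let $C_m=\langle u\rangle$ and $C_mv=\{u^iv: 0\le i<m\}$. If $S\subseteq C_mv$, then $D_{2m}$ has an $S$-sequencing.
   Context: For a group $G$ with identity $e$ and a set $S\subseteq G\setminus\{e\}$ with $|S|=k$, an $S$-sequencing of $G$ is an ordering $(g_1,\dots,g_k)$ of the elements of $S$ (each used exactly once) such that the partial products $h_0=e$, $h_i=g_1g_2\cdots g_i$ ($1\le i\le k$) are pairwise distinct. *)

From mathcomp Require Import all_boot all_algebra.
Set Implicit Arguments. Unset Strict Implicit. Unset Printing Implicit Defensive.
Import GRing.Theory.

Definition is_sequencing (T : finType) (mul : T -> T -> T) (e : T)
    (S : {set T}) (s : seq T) : bool :=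
  perm_eq s (enum S) && uniq (e :: scanl mul e s).

(* Concrete model of the dihedral group D_{2m}, m = n.+1 >= 1:
   (i, false) = u^i and (i, true) = u^i v, with i taken mod m. *)
Definition dih (n : nat) : finType := ('I_n.+1 * bool)%type.

Definition dmul (n : nat) (x y : dih n) : dih n :=
  ((x.1 + (if x.2 then - y.1 else y.1))%R, x.2 (+) y.2).
Definition de (n : nat) : dih n := (0%R, false).
Definition du (n : nat) : dih n := (Ordinal (ltn_pmod 1 (ltn0Sn n)), false).
Definition dv (n : nat) : dih n := (0%R, true).
Definition dpow (n : nat) (x : dih n) (i : nat) : dih n := iter i (dmul x) (de n).

Definition Cmv (n : nat) : {set dih n} :=
  [set dmul (dpow (du n) i) (dv n) | i : 'I_n.+1].

Definition has_sequencing (n : nat) (S : {set dih n}) : Prop :=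
  exists s : seq (dih n), is_sequencing (@dmul n) (de n) S s.

From mathcomp Require Import all_boot all_order all_algebra zify.
Import Order.TTheory GRing.Theory.

Set Implicit Arguments.
Unset Strict Implicit.
Unset Printing Implicit Defensive.

(* Take S = {u^(a_1) v, ..., u^(a_k) v} with a_1 > ... > a_k and multiply in
   that order.  Since (u^r)(u^a v) = u^(r+a) v and (u^c v)(u^b v) = u^(c-b),
   the partial products alternate between rotations u^(a_1 - a_2 + ...) and
   reflections u^(a_1 - a_2 + ... + a_j) v, and no exponent ever leaves
   [0, a_1].  The rotation exponents strictly increase, the reflection
   exponents strictly decrease, so the partial products are distinct. *)

Section DihedralSequencing.

Variable n : nat.
Implicit Types (r a b c : 'I_n.+1) (B : nat) (t : seq 'I_n.+1) (x : dih n).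

Definition drot r : dih n := (r, false).
Definition drefl a : dih n := (a, true).

Lemma val_addZp_small r a : r + a < n.+1 -> val (r + a)%R = r + a.
Proof. by move=> lt_ra_m; rewrite /= modn_small. Qed.

Lemma val_subZp_small c b : b <= c -> val (c - b)%R = c - b.
Proof.
move=> le_bc; rewrite /= modnDmr.
have [lt_c_m lt_b_m] := (ltn_ord c, ltn_ord b).
have -> : c + (n.+1 - b) = (c - b) + n.+1 by lia.
by rewrite modnDr modn_small //; lia.
Qed.

Lemma dmul_drot_drefl r a : dmul (drot r) (drefl a) = drefl (r + a)%R.
Proof. by []. Qed.

Lemma dmul_drefl_drefl c b : dmul (drefl c) (drefl b) = drot (c - b)%R.
Proof. by []. Qed.

Lemma sorted_gt_cons2 a b t :
  sorted >%O [:: a, b & t] ->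
  [/\ b < a, sorted >%O t & all (fun d : 'I_n.+1 => d < b) t].
Proof.
case/andP=> lt_ba path_bt; split=> //; first exact: path_sorted path_bt.
by apply: order_path_min path_bt => x y z /= lt_yx lt_zy; apply: ltn_trans lt_zy lt_yx.
Qed.

(* B is a strict bound on the exponents still to be multiplied; r + B <= m is
   what keeps every exponent from wrapping around mod m. *)
Lemma scanl_drefl_bounds r B t :
  sorted >%O t -> all (fun a => a < B) t -> r + B <= n.+1 ->
  {in scanl (@dmul n) (drot r) (map drefl t),
    forall y : dih n, if y.2 then y.1 < r + B else r < y.1}.
Proof.
have [k] := ubnP (size t); elim: k r B t => // k IH r B [|a [|b t]] // size_t.
  move=> _ /andP[lt_aB _] le_rB_m y; rewrite [scanl _ _ _]/= dmul_drot_drefl inE.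
  by move=> /eqP->; rewrite val_addZp_small /=; lia.
move=> /sorted_gt_cons2[lt_ba sorted_t lt_t_b] /and3P[lt_aB _ _] le_rB_m.
have val_ra : val (r + a)%R = r + a by apply: val_addZp_small; lia.
pose c := (r + a - b)%R.
have val_c : val c = r + a - b by rewrite val_subZp_small val_ra //; lia.
have le_cb_m : c + b <= n.+1 by rewrite val_c; lia.
have bounds_t := IH _ _ _ (ltnW (ltnSE size_t)) sorted_t lt_t_b le_cb_m.
rewrite [scanl _ _ _]/= dmul_drot_drefl dmul_drefl_drefl => y.
rewrite !inE => /or3P[/eqP-> | /eqP-> | y_t].
- by rewrite val_ra /=; lia.
- by rewrite val_c /=; lia.
move: y_t => /bounds_t; rewrite val_c; case: y => d [] /=; lia.
Qed.

Lemma drot_neq_drefl r a : (drot r == drefl a) = false.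
Proof. by rewrite xpair_eqE andbF. Qed.

Lemma uniq_scanl_drefl r B t :
  sorted >%O t -> all (fun a => a < B) t -> r + B <= n.+1 ->
  uniq (drot r :: scanl (@dmul n) (drot r) (map drefl t)).
Proof.
have [k] := ubnP (size t); elim: k r B t => // k IH r B [|a [|b t]] // size_t.
  by rewrite /= inE drot_neq_drefl.
move=> sorted_abt /and3P[lt_aB _ _] le_rB_m.
have [lt_ba sorted_t lt_t_b] := sorted_gt_cons2 sorted_abt.
have val_ra : val (r + a)%R = r + a by apply: val_addZp_small; lia.
pose c := (r + a - b)%R.
have val_c : val c = r + a - b by rewrite val_subZp_small val_ra //; lia.
have le_cb_m : c + b <= n.+1 by rewrite val_c; lia.
have bounds_t := scanl_drefl_bounds sorted_t lt_t_b le_cb_m.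
have uniq_t := IH _ _ _ (ltnW (ltnSE size_t)) sorted_t lt_t_b le_cb_m.
have drot_r_notin : drot r \notin scanl (@dmul n) (drot c) (map drefl t).
  by apply/negP => /bounds_t; rewrite val_c /=; lia.
have drefl_ra_notin : drefl (r + a)%R \notin scanl (@dmul n) (drot c) (map drefl t).
  by apply/negP => /bounds_t; rewrite val_c val_ra /=; lia.
have r_neq_c : r != c.
  by apply/eqP => /(congr1 (@nat_of_ord _)); rewrite val_c; lia.
rewrite [scanl _ _ _]/= dmul_drot_drefl dmul_drefl_drefl.
move: uniq_t; rewrite !cons_uniq => /andP[-> ->].
rewrite !in_cons !negb_or drot_r_notin drefl_ra_notin drot_neq_drefl.
by rewrite [drefl _ == _]eq_sym drot_neq_drefl /= r_neq_c.
Qed.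

Lemma uniq_scanl_drefl_decreasing t :
  sorted >%O t -> uniq (de n :: scanl (@dmul n) (de n) (map drefl t)).
Proof.
move=> sorted_t; apply: (uniq_scanl_drefl (B := n.+1)) => //.
by apply/allP => a _; apply: ltn_ord.
Qed.

Lemma dpow_snd x i : x.2 = false -> (dpow x i).2 = false.
Proof. by move=> x2; elim: i => //= i IH; rewrite /dmul /= IH x2. Qed.

Lemma drefl_Cmv x : x \in Cmv n -> drefl x.1 = x.
Proof. by case/imsetP=> i _ ->; rewrite /dmul /= dpow_snd. Qed.

End DihedralSequencing.

Theorem lemma3p1 (n : nat) (S : {set dih n}) :
  S \subset Cmv n -> has_sequencing S.
Proof.
move=> sub_S.
have dreflK : map (@drefl n) [seq x.1 | x <- enum S] = enum S.
  by rewrite -map_comp map_id_in // => x /[!mem_enum] /(subsetP sub_S) /drefl_Cmv.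
have uniq_idx : uniq [seq x.1 | x <- enum S].
  by have := enum_uniq S; rewrite -{1}dreflK => /map_uniq.
exists (map (@drefl n) (rev (sort <=%O [seq x.1 | x <- enum S]))); apply/andP; split.
  by rewrite -{2}dreflK perm_map // perm_rev perm_sort.
by apply: uniq_scanl_drefl_decreasing; rewrite rev_sorted sort_lt_sorted.
Qed.
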